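(* Every graphing is a modeling. That is, let $V$ be a standard Borel space with a probability measure $\mu$ and let $T_1,\dots,T_k$ be measure-preserving Borel involutions of $V$; let $\mathbf G$ be the graph on $V$ in which distinct $x,y$ are adjacent iff $T_j(x)=y$ for some $1\le j\le k$. Then $\mathbf G$ (with the Borel $\sigma$-algebra of $V$) is a relational sample space, and hence $(\mathbf G,\mu)$ is a modeling.
   Context: A relational sample space is a graph (or relational structure) whose domain is a standard Borel space such that for every $p$ and every first-order formula $\phi$ with free variables among $x_1,\dots,x_p$, the set $\{(v_1,\dots,v_p)\in V^p:\mathbf G\models\phi(v_1,\dots,v_p)\}$ is measurable with respect to the product $\sigma$-algebra of $V^p$. A modeling is a relational sample space equipped with a probability measure. *)

From HB Require Import structures.
From mathcomp Require Import all_boot all_order all_algebra.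
From mathcomp Require Import all_classical all_reals all_analysis.
Set Implicit Arguments. Unset Strict Implicit. Unset Printing Implicit Defensive.
Import Order.TTheory GRing.Theory Num.Theory.
Local Open Scope classical_set_scope.
Local Open Scope ring_scope.

(** A measurable space is standard Borel if its sigma-algebra is the Borel
   sigma-algebra of some Polish topology, i.e. of the topology induced by a
   complete separable metric. *)
Section StdBorel.
Variables (R : realType) (V : Type).

Definition is_metric (dist : V -> V -> R) :=
  [/\ forall x y, 0 <= dist x y,
      forall x y, dist x y = 0 <-> x = y,
      forall x y, dist x y = dist y x &
      forall x y z, dist x z <= dist x y + dist y z].

Definition metric_open (dist : V -> V -> R) : set (set V) :=
  [set U | forall x, U x -> exists2 e : R, 0 < e & [set y | dist x y < e] `<=` U].

Definition metric_cauchy (dist : V -> V -> R) (u : nat -> V) :=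
  forall e : R, 0 < e -> exists N, forall m n, (N <= m)%N -> (N <= n)%N ->
    dist (u m) (u n) < e.

Definition metric_converges (dist : V -> V -> R) (u : nat -> V) (x : V) :=
  forall e : R, 0 < e -> exists N, forall n, (N <= n)%N -> dist (u n) x < e.

Definition metric_complete (dist : V -> V -> R) :=
  forall u, metric_cauchy dist u -> exists x, metric_converges dist u x.

Definition metric_separable (dist : V -> V -> R) :=
  exists D : set V, countable D /\
    forall x (e : R), 0 < e -> exists y, D y /\ dist x y < e.

End StdBorel.

Definition standard_borel (R : realType) (d : measure_display)
  (V : measurableType d) :=
  exists dist : V -> V -> R,
    [/\ is_metric dist, metric_complete dist, metric_separable dist &
        forall A : set V, measurable A <-> <<s metric_open dist >> A].

Definition prod_measurable (d : measure_display) (V : measurableType d)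
  (p : nat) : set (set ('I_p -> V)) :=
  <<s [set S | exists (i : 'I_p) (A : set V),
                 measurable A /\ S = [set v | A (v i)]] >>.

(** * First-order formulas in the language of graphs (one binary relation),
    variables in de Bruijn style: variable [i] refers to the [i]-th entry of
    the environment; quantifiers push a new entry in front. *)
Inductive formula :=
  | FTrue | FFalse
  | FEq of nat & nat
  | FAdj of nat & nat
  | FNot of formula
  | FAnd of formula & formula
  | FOr of formula & formula
  | FImp of formula & formula
  | FEx of formula
  | FAll of formula.

Fixpoint sat (V : Type) (E : V -> V -> Prop) (env : seq V) (f : formula)
  : Prop :=
  match f with
  | FTrue => True
  | FFalse => False
  | FEq i j => match onth env i, onth env j with
               | Some x, Some y => x = y | _, _ => False end
  | FAdj i j => match onth env i, onth env j with
               | Some x, Some y => E x y | _, _ => False end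
  | FNot g => ~ sat E env g
  | FAnd g h => sat E env g /\ sat E env h
  | FOr g h => sat E env g \/ sat E env h
  | FImp g h => sat E env g -> sat E env h
  | FEx g => exists x, sat E (x :: env) g
  | FAll g => forall x, sat E (x :: env) g
  end.

Fixpoint fv_below (f : formula) (n : nat) : bool :=
  match f with
  | FTrue | FFalse => true
  | FEq i j | FAdj i j => (i < n)%N && (j < n)%N
  | FNot g => fv_below g n
  | FAnd g h | FOr g h | FImp g h => fv_below g n && fv_below h n
  | FEx g | FAll g => fv_below g n.+1
  end.

Definition definable_set (d : measure_display) (V : measurableType d)
  (E : V -> V -> Prop) (p : nat) (f : formula) : set ('I_p -> V) :=
  [set v | sat E [seq v i | i <- enum 'I_p] f].

Definition relational_sample_space (R : realType) (d : measure_display)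
  (V : measurableType d) (E : V -> V -> Prop) :=
  standard_borel R V /\
  forall (p : nat) (f : formula), fv_below f p ->
    @prod_measurable d V p (@definable_set d V E p f).

Definition modeling (R : realType) (d : measure_display)
  (V : measurableType d) (E : V -> V -> Prop) (mu : probability V R) :=
  relational_sample_space R E.

Definition measure_preserving_involution (R : realType) (d : measure_display)
  (V : measurableType d) (mu : probability V R) (T : V -> V) :=
  [/\ measurable_fun setT T,
      forall x, T (T x) = x &
      forall A : set V, measurable A -> mu (T @^-1` A) = mu A].

Definition graphing_adj (V : Type) (k : nat) (T : 'I_k -> V -> V) (x y : V) :=
  x <> y /\ exists j : 'I_k, T j x = y.

From HB Require Import structures.
From mathcomp Require Import all_boot all_order all_algebra.
From mathcomp Require Import all_classical all_reals all_analysis.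
From mathcomp Require Import lra.
Set Implicit Arguments. Unset Strict Implicit. Unset Printing Implicit Defensive.
Import Order.TTheory GRing.Theory Num.Theory.
Local Open Scope classical_set_scope.

(* Call a predicate of an environment e : nat -> V
   quantifier-free definable if it is a boolean combination of atoms
   "e i \in A" (A measurable) and "e i = f (e j)" (f a bimeasurable bijection);
   the adjacency relation of a graphing is of this form.  Such predicates are
   closed under "exists x", so every first-order formula is equivalent to one.
   To eliminate x, write the predicate as a decision tree whose inner nodes
   test either an x-free condition or "x = f (e j)", and whose leaves are
   measurable sets B in x.  A witness x either equals one of the finitely many
   points f (e j) tested along the way, and can be substituted, or avoids all
   of them; in the latter case the leaf B must contain a point outside a list
   of bounded length, which is automatic if B is infinite and a finite
   disjunction if B is finite.  Quantifier-free definable sets are measurable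
   in the product sigma-algebra as soon as the diagonal is measurable, which
   holds because a standard Borel space is countably separated. *)

Definition countably_separated d (V : measurableType d) :=
  exists S : nat -> nat -> set V, (forall m r, measurable (S m r)) /\
    forall x y, (forall m r, S m r x -> S m r y) -> x = y.

Section StandardBorel.
Context (R : realType) (d : measure_display) (V : measurableType d).
Local Open Scope ring_scope.

(* S m r is the ball of radius 1/(r+1) around the m-th point of a dense
   countable set (empty if there is no such point). *)
Lemma standard_borel_countably_separated :
  standard_borel R V -> countably_separated V.
Proof.
move=> [dist [[dist_ge0 dist_eq0 distC dist_tri] _ [D [cD denseD]] measE]].
have [f f_inj] := countable_injP _ cD.
pose rad (r : nat) : R := r.+1%:R^-1.
have rad_gt0 r : 0 < rad r by rewrite invr_gt0 ltr0n.
exists (fun m r => [set z | exists2 y, D y /\ f y = m & dist y z < rad r]).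
split=> [m r|x y sep].
  apply/measE; apply: sub_sigma_algebra => z [y Dy yz].
  exists (rad r - dist y z) => [|w /= zw]; first by rewrite subr_gt0.
  by exists y => //; have := dist_tri y z w; lra.
apply: contrapT => xy.
have dxy_gt0 : 0 < dist x y.
  by rewrite lt_neqAle dist_ge0 andbT eq_sym; apply/eqP => /dist_eq0.
have [r r_lt] : exists r, rad r < dist x y / 2.
  exists (Num.truncn (dist x y / 2)^-1).
  by rewrite -ltf_pV2 ?(posrE, divr_gt0) // invrK truncnS_gt.
have [z [Dz xz]] := denseD x _ (rad_gt0 r).
have [z' [Dz' fz'] z'y] : exists2 z', D z' /\ f z' = f z & dist z' y < rad r.
  by apply: (sep (f z) r); exists z; rewrite // distC.
have z'z : z' = z by apply: f_inj; rewrite ?in_setE.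
rewrite {}z'z in z'y; have := dist_tri x z y; lra.
Qed.

End StandardBorel.

Lemma measurable_preimageT d1 d2 (T1 : measurableType d1)
    (T2 : measurableType d2) (f : T1 -> T2) (B : set T2) :
  measurable_fun setT f -> measurable B -> measurable (f @^-1` B).
Proof. by move=> mf mB; rewrite -[_ @^-1` _]setTI; exact: mf. Qed.

Section Automorphism.
Context (d : measure_display) (V : measurableType d).

Definition measurable_automorphism (f : V -> V) :=
  exists g : V -> V,
    [/\ measurable_fun setT f, measurable_fun setT g, cancel f g & cancel g f].

Lemma measurable_automorphism_fun f :
  measurable_automorphism f -> measurable_fun setT f.
Proof. by case=> g []. Qed.

Lemma measurable_automorphism_id : measurable_automorphism id.
Proof. by exists id; split. Qed.

Lemma measurable_automorphism_comp f g :
  measurable_automorphism f -> measurable_automorphism g ->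
  measurable_automorphism (f \o g).
Proof.
move=> [f' [mf mf' ff' f'f]] [g' [mg mg' gg' g'g]].
exists (g' \o f'); split; try exact: measurableT_comp.
  by move=> x /=; rewrite ff' gg'.
by move=> x /=; rewrite g'g f'f.
Qed.

Lemma measurable_automorphism_inv f : measurable_automorphism f ->
  exists2 g, measurable_automorphism g & forall x y, f x = y <-> x = g y.
Proof.
move=> [g [mf mg fg gf]]; exists g; first by exists f.
by move=> x y; split=> [<-|->].
Qed.

End Automorphism.

Section QuantifierElimination.
Context (d : measure_display) (V : measurableType d).
Hypothesis V_sep : countably_separated V.

Lemma measurable_eq_fun d' (D : measurableType d') (f g : D -> V) :
  measurable_fun setT f -> measurable_fun setT g ->
  measurable [set x | f x = g x].
Proof.
move=> mf mg; have [S [mS sepS]] := V_sep.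
have -> : [set x | f x = g x] =
    \bigcap_m \bigcap_r (~` (f @^-1` S m r) `|` g @^-1` S m r).
  apply/seteqP; split=> [x fg m _ r _|x fg]; last first.
    by apply: sepS => m r; case: (fg m I r I).
  by rewrite /= fg; have [|] := pselect (S m r (g x)); [right|left].
apply: bigcapT_measurable => m; apply: bigcapT_measurable => r.
by apply: measurableU; [apply: measurableC|]; exact: measurable_preimageT.
Qed.

Lemma measurable_set1 (y : V) : measurable [set y].
Proof.
exact: measurable_eq_fun (@measurable_id _ V setT) (measurable_cst y).
Qed.

Definition scons (x : V) (e : nat -> V) : nat -> V :=
  fun i => if i is i'.+1 then e i' else x.

Inductive qf_definable : ((nat -> V) -> Prop) -> Prop :=
  | qf_mem i A : measurable A -> qf_definable (fun e => A (e i))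
  | qf_eq i j f : measurable_automorphism f ->
      qf_definable (fun e => e i = f (e j))
  | qf_not P : qf_definable P -> qf_definable (fun e => ~ P e)
  | qf_and P Q : qf_definable P -> qf_definable Q ->
      qf_definable (fun e => P e /\ Q e)
  | qf_or P Q : qf_definable P -> qf_definable Q ->
      qf_definable (fun e => P e \/ Q e).

Lemma qf_ext P Q :
  qf_definable P -> (forall e, P e <-> Q e) -> qf_definable Q.
Proof.
by move=> qP PQ; have <- // : P = Q by apply/funext => e; apply/propext.
Qed.

Lemma qf_true : qf_definable (fun _ => True).
Proof. exact: qf_ext (qf_mem 0 measurableT) _. Qed.

Lemma qf_false : qf_definable (fun _ => False).
Proof. by apply: qf_ext (qf_not qf_true) _. Qed.

Lemma qf_if c P Q : qf_definable c -> qf_definable P -> qf_definable Q ->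
  qf_definable (fun e => if `[< c e >] then P e else Q e).
Proof.
move=> qc qP qQ; apply: qf_ext (qf_or (qf_and qc qP) (qf_and (qf_not qc) qQ)) _.
by move=> e; case: asboolP; tauto.
Qed.

Lemma qf_has (I : eqType) (s : seq I) (P : I -> (nat -> V) -> Prop) :
  (forall i, i \in s -> qf_definable (P i)) ->
  qf_definable (fun e => exists2 i, i \in s & P i e).
Proof.
elim: s => [_|i s IH qP].
  by apply: qf_ext qf_false _ => e; split=> // -[].
apply: qf_ext (qf_or (qP i (mem_head _ _)) (IH _)) _ => [|e].
- by move=> i' i's; apply: qP; rewrite inE i's orbT.
- split=> [[Pi|[i' i's Pi']]|[i' +]]; first by exists i; rewrite ?mem_head.
    by exists i'; rewrite // inE i's orbT.
  by rewrite inE => /orP[/eqP-> | i's]; [left | right; exists i'].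
Qed.

Lemma qf_notin (t : (nat -> V) -> V) (ts : seq (nat * (V -> V))) :
  (forall p, p \in ts -> qf_definable (fun e => t e = p.2 (e p.1))) ->
  qf_definable (fun e => t e \notin [seq p.2 (e p.1) | p <- ts]).
Proof.
move=> qts; apply: qf_ext (qf_not (qf_has qts)) _ => e.
split=> [tX|/negP tX [p pts tp]]; first by apply/negP => /mapP.
by apply/tX/mapP; exists p.
Qed.

Inductive decision_tree : (V -> (nat -> V) -> Prop) -> Prop :=
  | tree_leaf B : measurable B -> decision_tree (fun x _ => B x)
  | tree_if c Q1 Q2 : qf_definable c -> decision_tree Q1 -> decision_tree Q2 ->
      decision_tree (fun x e => if `[< c e >] then Q1 x e else Q2 x e)
  | tree_if_eq j f Q1 Q2 : measurable_automorphism f ->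
      decision_tree Q1 -> decision_tree Q2 ->
      decision_tree (fun x e => if `[< x = f (e j) >] then Q1 x e else Q2 x e).

Lemma tree_ext Q Q' :
  decision_tree Q -> (forall x e, Q x e <-> Q' x e) -> decision_tree Q'.
Proof.
move=> tQ QQ'; have <- // : Q = Q'.
by apply/funext => x; apply/funext => e; apply/propext.
Qed.

Lemma tree_qf c : qf_definable c -> decision_tree (fun _ e => c e).
Proof.
move=> qc; apply: tree_ext
  (tree_if qc (tree_leaf measurableT) (tree_leaf measurable0)) _.
by move=> x e; case: asboolP.
Qed.

Lemma tree_eq j f :
  measurable_automorphism f -> decision_tree (fun x e => x = f (e j)).
Proof.
move=> af; apply: tree_ext
  (tree_if_eq j af (tree_leaf measurableT) (tree_leaf measurable0)) _.
by move=> x e; case: asboolP.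
Qed.

Lemma tree_not Q : decision_tree Q -> decision_tree (fun x e => ~ Q x e).
Proof.
elim=> [B mB|c Q1 Q2 qc _ t1 _ t2|j f Q1 Q2 af _ t1 _ t2].
- exact: tree_leaf (measurableC mB).
- by apply: tree_ext (tree_if qc t1 t2) _ => x e; case: asboolP.
- by apply: tree_ext (tree_if_eq j af t1 t2) _ => x e; case: asboolP.
Qed.

(* The connective distributes over the tests of either tree, so it is pushed
   down to pairs of leaves. *)
Lemma tree_binop (op : Prop -> Prop -> Prop) Q Q' :
  (forall B C : set V, measurable B -> measurable C ->
    measurable [set x | op (B x) (C x)]) ->
  decision_tree Q -> decision_tree Q' ->
  decision_tree (fun x e => op (Q x e) (Q' x e)).
Proof.
move=> mop tQ tQ'.
elim: tQ => [B mB|c Q1 Q2 qc _ t1 _ t2|j f Q1 Q2 af _ t1 _ t2].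
- elim: tQ' => [C mC|c Q1 Q2 qc _ t1 _ t2|j f Q1 Q2 af _ t1 _ t2].
  + exact: tree_leaf (mop _ _ mB mC).
  + by apply: tree_ext (tree_if qc t1 t2) _ => x e; case: asboolP.
  + by apply: tree_ext (tree_if_eq j af t1 t2) _ => x e; case: asboolP.
- by apply: tree_ext (tree_if qc t1 t2) _ => x e; case: asboolP.
- by apply: tree_ext (tree_if_eq j af t1 t2) _ => x e; case: asboolP.
Qed.

Lemma tree_qf_scons P :
  qf_definable P -> decision_tree (fun x e => P (scons x e)).
Proof.
elim=> [[|i] A mA|[|i] [|j] f af|P' _ t|P1 P2 _ t1 _ t2|P1 P2 _ t1 _ t2].
- exact: tree_leaf mA.
- exact: tree_qf (qf_mem i mA).
- exact: tree_leaf (measurable_eq_fun (@measurable_id _ V setT)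
    (measurable_automorphism_fun af)).
- exact: tree_eq.
- have [g ag fg] := measurable_automorphism_inv af.
  by apply: tree_ext (tree_eq i ag) _ => x e /=; rewrite -fg; split=> ->.
- exact: tree_qf (qf_eq i j af).
- exact: tree_not.
- exact: tree_binop measurableI t1 t2.
- exact: tree_binop measurableU t1 t2.
Qed.

Lemma qf_eq_comp i j f g : measurable_automorphism f ->
  measurable_automorphism g -> qf_definable (fun e => f (e i) = g (e j)).
Proof.
move=> af ag; have [f' af' ff'] := measurable_automorphism_inv af.
apply: qf_ext (qf_eq i j (measurable_automorphism_comp af' ag)) _ => e.
by rewrite ff'.
Qed.

Lemma qf_subst Q j f : decision_tree Q -> measurable_automorphism f ->
  qf_definable (fun e => Q (f (e j)) e).
Proof.
move=> tQ af; elim: tQ => [B mB|c Q1 Q2 qc _ q1 _ q2|j' g Q1 Q2 ag _ q1 _ q2].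
- exact: qf_mem (measurable_preimageT (measurable_automorphism_fun af) mB).
- exact: qf_if.
- exact: qf_if (qf_eq_comp j j' af ag) q1 q2.
Qed.

(* ts lists the points f (e j) that the tests on the path to the current node
   have ruled out as the witness. *)
Lemma qf_exists_avoiding Q (ts : seq (nat * (V -> V))) :
  decision_tree Q -> (forall p, p \in ts -> measurable_automorphism p.2) ->
  qf_definable (fun e =>
    exists2 x, x \notin [seq p.2 (e p.1) | p <- ts] & Q x e).
Proof.
move=> tQ.
elim: tQ ts => [B mB|c Q1 Q2 qc _ q1 _ q2|j f Q1 Q2 af t1 _ _ q2] ts ats.
- have [/finite_seqP[s ->]|Binf] := pselect (finite_set B).
    have qy y : qf_definable (fun e => y \notin [seq p.2 (e p.1) | p <- ts]).
      apply: (qf_notin (t := fun _ => y)) => p pts.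
      apply: qf_ext (qf_mem p.1 (measurable_preimageT
        (measurable_automorphism_fun (ats p pts)) (measurable_set1 y))) _ => e.
      by split=> ->.
    apply: qf_ext (@qf_has _ s _ (fun y _ => qy y)) _ => e.
    by split=> -[y y1 y2]; exists y.
  apply: qf_ext qf_true _ => e; split=> // _.
  have /infinite_setN0[x [Bx /negP xX]] := infinite_setD Binf
    (finite_seq [seq p.2 (e p.1) | p <- ts]).
  by exists x.
- apply: qf_ext (qf_if qc (q1 ts ats) (q2 ts ats)) _ => e.
  by case: asboolP => _; split=> -[x]; exists x.
- have ats' p : p \in (j, f) :: ts -> measurable_automorphism p.2.
    by rewrite inE => /orP[/eqP-> //|]; exact: ats.
  have qnotin :
      qf_definable (fun e => f (e j) \notin [seq p.2 (e p.1) | p <- ts]).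
    by apply: qf_notin => p pts; exact: qf_eq_comp af (ats p pts).
  apply: qf_ext
    (qf_or (qf_and qnotin (qf_subst j t1 af)) (q2 _ ats')) _ => e /=.
  split=> [[[fX Q1f]|[x]]|[x xX]].
  + by exists (f (e j)) => //; rewrite asboolT.
  + rewrite inE negb_or => /andP[/eqP xf xX] Q2x.
    by exists x; rewrite // asboolF.
  + case: asboolP => [xf|xf] Qx; first by left; rewrite -xf.
    by right; exists x; rewrite // inE negb_or xX andbT; apply/eqP.
Qed.

Lemma qf_exists P :
  qf_definable P -> qf_definable (fun e => exists x, P (scons x e)).
Proof.
move=> qP.
apply: qf_ext (qf_exists_avoiding (tree_qf_scons qP) (ts := [::]) _) _ => // e.
by split=> -[x]; exists x.
Qed.

Lemma measurable_qf d' (D : measurableType d') (env : D -> nat -> V) P :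
  (forall i, measurable_fun setT (fun x => env x i)) -> qf_definable P ->
  measurable [set x | P (env x)].
Proof.
move=> menv; elim=> [i A mA|i j f af|P' _ mP|P1 P2 _ m1 _ m2|P1 P2 _ m1 _ m2].
- exact: measurable_preimageT (menv i) mA.
- apply: measurable_eq_fun (menv i) _.
  exact: measurableT_comp (measurable_automorphism_fun af) (menv j).
- exact: measurableC.
- exact: measurableI.
- exact: measurableU.
Qed.

End QuantifierElimination.

Section FirstOrder.
Context (d : measure_display) (V : measurableType d) (E : V -> V -> Prop).
Hypothesis V_sep : countably_separated V.
Hypothesis qf_E : forall i j, qf_definable (fun e => E (e i) (e j)).

Lemma onth_size (s : seq V) i :
  (i < size s)%N -> onth s i = Some (nth point s i).
Proof. by move=> si; rewrite onthE (nth_map point). Qed.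

Lemma nth_cons_scons (x : V) s : nth point (x :: s) = scons x (nth point s).
Proof. by apply/funext => -[]. Qed.

Lemma sat_qf_definable f n : fv_below f n ->
  exists2 P, qf_definable P &
    forall env, size env = n -> sat E env f <-> P (nth point env).
Proof.
elim: f n => [||i j|i j|g IH|g IHg h IHh|g IHg h IHh|g IHg h IHh|g IH|g IH]
  n /=.
- by exists (fun _ => True); [exact: qf_true|].
- by exists (fun _ => False); [exact: qf_false|].
- move=> /andP[ni nj]; exists (fun e => e i = id (e j)).
    exact: qf_eq (measurable_automorphism_id V).
  by move=> env sz; rewrite !onth_size ?sz.
- move=> /andP[ni nj]; exists (fun e => E (e i) (e j)) => // env sz.
  by rewrite !onth_size ?sz.
- move=> /IH[P qP satP]; exists (fun e => ~ P e); first exact: qf_not.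
  by move=> env /satP ->.
- move=> /andP[/IHg[P qP satP] /IHh[P' qP' satP']].
  exists (fun e => P e /\ P' e); first exact: qf_and.
  by move=> env sz; rewrite satP // satP'.
- move=> /andP[/IHg[P qP satP] /IHh[P' qP' satP']].
  exists (fun e => P e \/ P' e); first exact: qf_or.
  by move=> env sz; rewrite satP // satP'.
- move=> /andP[/IHg[P qP satP] /IHh[P' qP' satP']].
  exists (fun e => ~ P e \/ P' e); first exact: qf_or (qf_not _) _.
  by move=> env sz; rewrite implyE satP // satP'.
- move=> /IH[P qP satP]; exists (fun e => exists x, P (scons x e)).
    exact: qf_exists.
  move=> env sz.
  have satPx x : sat E (x :: env) g <-> P (scons x (nth point env)).
    by rewrite satP /= ?sz // nth_cons_scons.
  by split=> -[x /satPx]; exists x.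
- move=> /IH[P qP satP]; exists (fun e => ~ exists x, ~ P (scons x e)).
    exact: qf_not (qf_exists V_sep (qf_not qP)).
  move=> env sz.
  have satPx x : sat E (x :: env) g <-> P (scons x (nth point env)).
    by rewrite satP /= ?sz // nth_cons_scons.
  split=> [allP [x]|nexP x]; first by apply; apply/satPx.
  by apply/satPx; apply: contrapT => Px; apply: nexP; exists x.
Qed.

End FirstOrder.

Lemma qf_graphing_adj d (V : measurableType d) k (T : 'I_k -> V -> V) :
  (forall l, measurable_automorphism (T l)) ->
  forall i j, qf_definable (fun e => graphing_adj T (e i) (e j)).
Proof.
move=> aT i j.
apply: qf_ext (qf_and (qf_not (qf_eq i j (measurable_automorphism_id V)))
  (qf_has (s := enum 'I_k) (fun l _ => qf_eq j i (aT l)))) _ => e.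
split=> -[ij Tij]; split=> //.
  by have [l _ Tl] := Tij; exists l.
by have [l Tl] := Tij; exists l; rewrite ?mem_enum ?Tl.
Qed.

Lemma prod_measurable_qf d (V : measurableType d) p P :
  countably_separated V -> qf_definable P ->
  @prod_measurable d V p [set v | P (nth point [seq v i | i <- enum 'I_p])].
Proof.
pose V_p := g_sigma_algebraType [set S | exists (i : 'I_p) (A : set V),
  measurable A /\ S = [set v : 'I_p -> V | A (v i)]].
move=> V_sep; apply: (measurable_qf V_sep (D := V_p)) => i.
have [ip|pi] := ltnP i p; last first.
  have -> : (fun v : V_p => nth point [seq v j | j <- enum 'I_p] i) = cst point.
    by apply/funext => v; rewrite nth_default // size_map size_enum_ord.
  exact: measurable_cst.
have -> : (fun v : V_p => nth point [seq v j | j <- enum 'I_p] i) =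
    fun v => v (Ordinal ip).
  apply/funext => v; rewrite (nth_map (Ordinal ip)) ?size_enum_ord //.
  by congr v; apply: val_inj; rewrite /= nth_enum_ord.
move=> _ A mA; rewrite setTI.
by apply: sub_sigma_algebra; exists (Ordinal ip), A.
Qed.

Theorem lemma8p38 (R : realType) (d : measure_display) (V : measurableType d)
  (mu : probability V R) (k : nat) (T : 'I_k -> V -> V) :
  standard_borel R V ->
  (forall j, measure_preserving_involution mu (T j)) ->
  relational_sample_space R (graphing_adj T) /\
  modeling (graphing_adj T) mu.
Proof.
move=> stdV mpi; have V_sep := standard_borel_countably_separated stdV.
have aT j : measurable_automorphism (T j).
  by have [mT TT _] := mpi j; exists (T j); split.
suff rss : relational_sample_space R (graphing_adj T) by [].
split=> // p f fv.
have [P qP satP] := sat_qf_definable V_sep (qf_graphing_adj aT) fv.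
have -> : definable_set (graphing_adj T) f =
    [set v | P (nth point [seq v i | i <- enum 'I_p])].
  apply/seteqP; split=> v;
    by rewrite /definable_set /= satP // size_map size_enum_ord.
exact: prod_measurable_qf V_sep qP.
Qed.
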